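(* Let $0<r'<r<1$ and let $K\subseteq\mathbb{R}$ be compact. Then there is $c>0$ such that $K\subseteq\theta_{r'}(\mathbb{Z}((T))_{r,\le c})$, where $\theta_{r'}\big(\sum a_nT^n\big)=\sum a_n(r')^n$.
   Context: $\mathbb{Z}((T))_{r,\le c}$ is the set of integer Laurent series $\sum_{n\gg-\infty}a_nT^n$ ($a_n\in\mathbb{Z}$, $a_n=0$ for $n$ sufficiently negative) with $\sum|a_n|r^n\le c$. *)

From Stdlib Require Import Reals ZArith Rtopology.
From Coquelicot Require Import Coquelicot.
Open Scope R_scope.

(* An integer Laurent series sum_n a_n T^n is a coefficient function a : Z -> Z
   with a_n = 0 for n sufficiently negative; N is such a lower bound. *)
Definition laurent_bound (a : Z -> Z) (N : Z) : Prop :=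
  forall n : Z, (n < N)%Z -> a n = 0%Z.

Definition is_laurent (a : Z -> Z) : Prop := exists N, laurent_bound a N.

(* a belongs to Z((T))_{r, <= c}: sum_n |a_n| r^n (converges and) is <= c.
   The sum is taken from a lower bound N of the support; the terms below N vanish. *)
Definition in_Zr_le (r c : R) (a : Z -> Z) : Prop :=
  exists N : Z, laurent_bound a N /\
    exists s : R,
      is_series (fun k : nat => Rabs (IZR (a (N + Z.of_nat k)%Z)) * powerRZ r (N + Z.of_nat k)) s
      /\ s <= c.

Definition theta_eq (r' : R) (a : Z -> Z) (x : R) : Prop :=
  exists N : Z, laurent_bound a N /\
    is_series (fun k : nat => IZR (a (N + Z.of_nat k)%Z) * powerRZ r' (N + Z.of_nat k)) x.

From Stdlib Require Import Reals ZArith Rtopology Lra Lia.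
From Coquelicot Require Import Coquelicot.
Open Scope R_scope.

(* Expand x greedily in base q = r': the leading digit is d_0 = floor x, and
   every later digit satisfies 0 <= d_k < 1/q, since the remainder left after
   step k - 1 is below q^(k-1).  Hence sum_k |d_k| r^k <= (|x| + 1 + 1/q)/(1 - r),
   which is bounded uniformly on the bounded set K. *)

Fixpoint greedy_rem (q x : R) (k : nat) : R :=
  match k with
  | O => x
  | S k => greedy_rem q x k - IZR (Int_part (greedy_rem q x k / q ^ k)) * q ^ k
  end.

Definition greedy_digit (q x : R) (k : nat) : Z := Int_part (greedy_rem q x k / q ^ k).

Lemma Int_part_bounds (y : R) : y - 1 < IZR (Int_part y) <= y.
Proof. destruct (base_Int_part y); lra. Qed.

Lemma greedy_rem_S (q x : R) (k : nat) :
  greedy_rem q x (S k) = greedy_rem q x k - IZR (greedy_digit q x k) * q ^ k.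
Proof. reflexivity. Qed.

Lemma greedy_rem_bounds (q x : R) (k : nat) :
  0 < q -> 0 <= greedy_rem q x (S k) < q ^ k.
Proof.
  intro Hq. rewrite greedy_rem_S. unfold greedy_digit.
  assert (Hqk : 0 < q ^ k) by (apply pow_lt; lra).
  set (y := greedy_rem q x k / q ^ k).
  replace (greedy_rem q x k) with (y * q ^ k) by (unfold y; field; lra).
  destruct (Int_part_bounds y). split; nra.
Qed.

Lemma greedy_digit_S_bounds (q x : R) (k : nat) :
  0 < q -> 0 <= IZR (greedy_digit q x (S k)) < / q.
Proof.
  intro Hq. unfold greedy_digit.
  assert (Hqk : 0 < q ^ k) by (apply pow_lt; lra).
  destruct (greedy_rem_bounds q x k Hq) as [Hrem0 Hrem].
  set (y := greedy_rem q x (S k) / q ^ S k).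
  assert (Hy : 0 <= y < / q).
  { assert (0 < / q ^ S k) by (apply Rinv_0_lt_compat, pow_lt; lra).
    replace (/ q) with (q ^ k * / q ^ S k) by (simpl; field; lra).
    unfold y, Rdiv. split; [apply Rmult_le_pos | apply Rmult_lt_compat_r]; lra. }
  destruct (Int_part_bounds y) as [Hlo Hhi].
  assert (Hnonneg : (0 <= Int_part y)%Z).
  { assert (-1 < Int_part y)%Z by (apply lt_IZR; lra). lia. }
  apply IZR_le in Hnonneg. lra.
Qed.

Lemma greedy_digit_abs_le (q x : R) (k : nat) :
  0 < q -> Rabs (IZR (greedy_digit q x k)) <= Rabs x + 1 + / q.
Proof.
  intro Hq. assert (0 < / q) by (apply Rinv_0_lt_compat; lra).
  destruct k as [| k].
  - unfold greedy_digit. simpl. rewrite Rdiv_1_r.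
    destruct (Int_part_bounds x). apply Rabs_le.
    pose proof (Rle_abs x). pose proof (Rle_abs (- x)). rewrite Rabs_Ropp in *. lra.
  - destruct (greedy_digit_S_bounds q x k Hq).
    rewrite Rabs_pos_eq by lra. pose proof (Rabs_pos x). lra.
Qed.

Lemma greedy_partial_sum (q x : R) (n : nat) : 0 < q ->
  sum_n (fun k => IZR (greedy_digit q x k) * q ^ k) n = x - greedy_rem q x (S n).
Proof.
  intro Hq. induction n as [| n IH].
  - rewrite sum_O, greedy_rem_S. simpl. ring.
  - rewrite sum_Sn, IH, (greedy_rem_S q x (S n)). change plus with Rplus. simpl. ring.
Qed.

Lemma is_series_greedy (q x : R) : 0 < q < 1 ->
  is_series (fun k => IZR (greedy_digit q x k) * q ^ k) x.
Proof.
  intro Hq.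
  enough (H : is_lim_seq (sum_n (fun k => IZR (greedy_digit q x k) * q ^ k)) x) by exact H.
  apply (is_lim_seq_ext (fun n => x - greedy_rem q x (S n))).
  { intro n. rewrite greedy_partial_sum; lra. }
  replace (Finite x) with (Rbar_minus x 0) by (simpl; f_equal; ring).
  apply is_lim_seq_minus'; [apply is_lim_seq_const |].
  apply is_lim_seq_le_le with (fun _ => 0) (fun n => q ^ n).
  - intro n. destruct (greedy_rem_bounds q x n); lra.
  - apply is_lim_seq_const.
  - apply is_lim_seq_geom. rewrite Rabs_pos_eq; lra.
Qed.

Lemma is_series_le_geom (u : nat -> R) (C r : R) : 0 <= r < 1 ->
  (forall k, 0 <= u k <= C * r ^ k) -> exists s, is_series u s /\ s <= C / (1 - r).
Proof.
  intros Hr Hu.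
  assert (Hgeo : is_series (fun k => C * r ^ k) (C / (1 - r))).
  { apply (is_series_scal C (fun k => r ^ k)).
    apply is_series_geom. rewrite Rabs_pos_eq; lra. }
  assert (Hex : ex_series u).
  { apply (ex_series_le (V := R_CompleteNormedModule)) with (fun k => C * r ^ k).
    - intro k. unfold norm; simpl; unfold abs; simpl.
      rewrite Rabs_pos_eq; apply Hu.
    - eexists; exact Hgeo. }
  exists (Series u). split; [apply Series_correct, Hex |].
  rewrite <- (is_series_unique _ _ Hgeo).
  apply Series_le; [exact Hu | eexists; exact Hgeo].
Qed.

Lemma greedy_weighted_norm_le (q r x M : R) : 0 < q -> 0 <= r < 1 -> Rabs x <= M ->
  exists s, is_series (fun k => Rabs (IZR (greedy_digit q x k)) * r ^ k) s
            /\ s <= (M + 1 + / q) / (1 - r).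
Proof.
  intros Hq Hr HxM. apply is_series_le_geom; [exact Hr |].
  intro k. assert (0 <= r ^ k) by (apply pow_le; lra).
  pose proof (greedy_digit_abs_le q x k Hq).
  pose proof (Rabs_pos (IZR (greedy_digit q x k))).
  split; nra.
Qed.

Definition nat_coeffs (d : nat -> Z) (n : Z) : Z :=
  if (n <? 0)%Z then 0%Z else d (Z.to_nat n).

Lemma laurent_bound_nat_coeffs (d : nat -> Z) : laurent_bound (nat_coeffs d) 0.
Proof. intros n Hn. unfold nat_coeffs. destruct (Z.ltb_spec n 0); [reflexivity | lia]. Qed.

Lemma nat_coeffs_of_nat (d : nat -> Z) (k : nat) : nat_coeffs d (0 + Z.of_nat k) = d k.
Proof.
  unfold nat_coeffs. destruct (Z.ltb_spec (0 + Z.of_nat k) 0); [lia |].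
  now rewrite Z.add_0_l, Nat2Z.id.
Qed.

Lemma in_Zr_le_nat_coeffs (r c : R) (d : nat -> Z) :
  (exists s, is_series (fun k => Rabs (IZR (d k)) * r ^ k) s /\ s <= c) ->
  in_Zr_le r c (nat_coeffs d).
Proof.
  intros [s [Hs Hsc]]. exists 0%Z. split; [apply laurent_bound_nat_coeffs |].
  exists s. split; [| exact Hsc].
  apply (is_series_ext (fun k => Rabs (IZR (d k)) * r ^ k)); [| exact Hs].
  intro k. now rewrite nat_coeffs_of_nat, pow_powerRZ.
Qed.

Lemma theta_eq_nat_coeffs (q x : R) (d : nat -> Z) :
  is_series (fun k => IZR (d k) * q ^ k) x -> theta_eq q (nat_coeffs d) x.
Proof.
  intro Hs. exists 0%Z. split; [apply laurent_bound_nat_coeffs |].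
  apply (is_series_ext (fun k => IZR (d k) * q ^ k)); [| exact Hs].
  intro k. now rewrite nat_coeffs_of_nat, pow_powerRZ.
Qed.

Lemma compact_abs_bounded (K : R -> Prop) :
  compact K -> exists M, 0 <= M /\ forall x, K x -> Rabs x <= M.
Proof.
  intro HK. destruct (compact_P1 K HK) as [m [M HmM]].
  exists (Rmax (Rabs m) (Rabs M)). split.
  { apply Rle_trans with (Rabs m); [apply Rabs_pos | apply Rmax_l]. }
  intros x Kx. destruct (HmM x Kx).
  pose proof (Rmax_l (Rabs m) (Rabs M)). pose proof (Rmax_r (Rabs m) (Rabs M)).
  pose proof (Rle_abs M). pose proof (Rle_abs (- m)). rewrite Rabs_Ropp in *.
  apply Rabs_le. lra.
Qed.

Theorem mainTheorem14 (r r' : R) (K : R -> Prop) :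
  0 < r' -> r' < r -> r < 1 -> compact K ->
  exists c : R, 0 < c /\
    forall x : R, K x ->
      exists a : Z -> Z, is_laurent a /\ in_Zr_le r c a /\ theta_eq r' a x.
Proof.
  intros Hr' Hr'r Hr1 HK.
  destruct (compact_abs_bounded K HK) as [M [HM0 HM]].
  exists ((M + 1 + / r') / (1 - r)). split.
  { assert (0 < / r') by (apply Rinv_0_lt_compat; lra).
    apply Rdiv_lt_0_compat; lra. }
  intros x Kx. exists (nat_coeffs (greedy_digit r' x)). split; [| split].
  - exists 0%Z. apply laurent_bound_nat_coeffs.
  - apply in_Zr_le_nat_coeffs, greedy_weighted_norm_le; [lra | lra | exact (HM x Kx)].
  - apply theta_eq_nat_coeffs, is_series_greedy. lra.
Qed.
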